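(* Let $f:\{0,1\}^n\to\{0,1\}$ be $\varepsilon$-far from every $k$-junta. Then the unitary $U_f=\mathrm{diag}\big((-1)^{f(x)}\big)_{x\in\{0,1\}^n}$ is $\sqrt{\varepsilon/2}$-far from every quantum $k$-junta, i.e. $\mathrm{dist}(U_f,V)\ge\sqrt{\varepsilon/2}$ for every quantum $k$-junta $V\in\mathcal{U}_N$.
   Context: $N=2^n$, $\mathcal{U}_N$ is the set of $N\times N$ unitaries. A Boolean function is a $k$-junta if it depends on at most... precisely: $f(x)=g(x_{i_1},\dots,x_{i_k})$ for some $g:\{0,1\}^k\to\{0,1\}$ and fixed indices; $f$ is $\varepsilon$-far from every $k$-junta if $\Pr_{x\sim\{0,1\}^n}[f(x)\ne g(x)]\ge\varepsilon$ for every $k$-junta $g$ ($x$ uniform). A unitary $U\in\mathcal{U}_N$ is a quantum $k$-junta if $U=V_S\otimes I_{\overline{S}}$ for some $S\subseteq[n]$ with $|S|=k$ and $V_S\in\mathcal{U}_{2^k}$ acting on the qubits in $S$. For $A,B\in\mathbb{C}^{N\times N}$, $\mathrm{dist}(A,B):=\min_{\theta\in[0,2\pi)}\frac{1}{\sqrt{2N}}\|e^{i\theta}A-B\|$ with $\|\cdot\|$ the Frobenius norm. *)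

From HB Require Import structures.
From mathcomp Require Import all_boot all_order all_algebra.
From mathcomp Require Import all_classical all_reals all_analysis.
From mathcomp Require Import complex.
Set Implicit Arguments. Unset Strict Implicit. Unset Printing Implicit Defensive.
Import Order.TTheory GRing.Theory Num.Theory ComplexField.
Local Open Scope ring_scope.

Section Defs.
Variable R : realType.
Local Notation C := R[i].

Definition bitstring (n : nat) := {ffun 'I_n -> bool}.

Definition is_junta (n k : nat) (f : bitstring n -> bool) : Prop :=
  exists (idx : 'I_k -> 'I_n) (g : {ffun 'I_k -> bool} -> bool),
    forall x : bitstring n, f x = g [ffun t => x (idx t)].

Definition disagree (n : nat) (f g : bitstring n -> bool) : R :=
  #|[set x : bitstring n | f x != g x]|%:R / (2 ^ n)%:R.

Definition far_from_juntas (n k : nat) (f : bitstring n -> bool) (eps : R) : Prop :=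
  forall g : bitstring n -> bool, is_junta k g -> eps <= disagree f g.

(* j-th bit of a basis index x in {0,...,2^n - 1}; qubit j <-> bit j *)
Definition bit (j x : nat) : bool := odd (x %/ 2 ^ j).
Definition bits_of (n : nat) (x : 'I_(2 ^ n)) : bitstring n := [ffun j : 'I_n => bit j x].

Definition Uf (n : nat) (f : bitstring n -> bool) : 'M[C]_(2 ^ n) :=
  \matrix_(x, y) (if x == y then (-1) ^+ f (bits_of x) else 0).

Definition adjoint (m : nat) (A : 'M[C]_m) : 'M[C]_m := (map_mx Num.conj A)^T.
Definition unitary (m : nat) (A : 'M[C]_m) : Prop :=
  A *m adjoint A = 1%:M /\ adjoint A *m A = 1%:M.

(* index in {0,...,2^|S|-1} of the restriction of basis state x to the qubits
   of S (listed in increasing order); the "mod" is a no-op, used only to land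
   in the ordinal type *)
Definition sub_index_nat (n : nat) (S : {set 'I_n}) (x : nat) : nat :=
  \sum_(t < #|S|) bit (nth 0%N (map val (enum S)) t) x * 2 ^ t.

Lemma pow2_gt0 (m : nat) : (0 < 2 ^ m)%N.
Proof. by rewrite expn_gt0. Qed.

Definition sub_index (n : nat) (S : {set 'I_n}) (x : nat) : 'I_(2 ^ #|S|) :=
  Ordinal (ltn_pmod (sub_index_nat S x) (pow2_gt0 #|S|)).

Definition agree_off (n : nat) (S : {set 'I_n}) (x y : nat) : bool :=
  [forall j : 'I_n, (j \notin S) ==> (bit j x == bit j y)].

Definition tensor_id (n : nat) (S : {set 'I_n}) (W : 'M[C]_(2 ^ #|S|)) :
    'M[C]_(2 ^ n) :=
  \matrix_(x, y) (if agree_off S x y then W (sub_index S x) (sub_index S y) else 0).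

Definition quantum_junta (n k : nat) (U : 'M[C]_(2 ^ n)) : Prop :=
  exists (S : {set 'I_n}) (W : 'M[C]_(2 ^ #|S|)),
    #|S| = k /\ unitary W /\ U = tensor_id W.

Definition abs2 (z : C) : R := (complex.Re z) ^+ 2 + (complex.Im z) ^+ 2.
Definition frob (m : nat) (A : 'M[C]_m) : R :=
  Num.sqrt (\sum_(i < m) \sum_(j < m) abs2 (A i j)).

Definition expi (t : R) : C := (cos t +i* sin t)%C.

Definition dist (m : nat) (A B : 'M[C]_m) : R :=
  inf [set (Num.sqrt (2 * m%:R))^-1 * frob (expi t *: A - B) | t in `[0, 2 * pi[%classic].

End Defs.

From HB Require Import structures.
From mathcomp Require Import all_boot all_order all_algebra.
From mathcomp Require Import all_classical all_reals all_analysis.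
From mathcomp Require Import complex.
From mathcomp Require Import lra.
Import Order.TTheory GRing.Theory Num.Theory ComplexField.
Local Open Scope ring_scope.
Set Implicit Arguments. Unset Strict Implicit.

(* For a fixed phase [e^{it}], the diagonal entry of [e^{it} U_f - V_S (x) I]
   at [x] is [e^{it} (-1)^{f x} - w], where [w] is a diagonal entry of [V_S]
   depending only on the bits of [x] in [S].  Rounding [e^{-it} w] to the
   nearer of [1] and [-1] therefore defines a [|S|]-junta [g], and at every
   [x] with [f x <> g x] that diagonal entry has modulus at least [1].  Hence
   the squared Frobenius norm is at least [#{x | f x <> g x} >= eps 2^n],
   and dividing by [2 * 2^n] gives the bound, uniformly in the phase. *)

Lemma eq_from_bits (n x y : nat) : (x < 2 ^ n)%N -> (y < 2 ^ n)%N ->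
  (forall j, (j < n)%N -> bit j x = bit j y) -> x = y.
Proof.
elim: n x y => [|n IHn] x y.
  by rewrite expn0 !ltnS !leqn0 => /eqP -> /eqP ->.
move=> ltx lty eq_bits.
have eq_odd : odd x = odd y by have := eq_bits 0%N isT; rewrite /bit expn0 !divn1.
have eq_half : (x %/ 2 = y %/ 2)%N.
  apply: IHn => [||j ltjn]; rewrite ?ltn_divLR // ?[(_ * 2)%N]mulnC -?expnS //.
  by have := eq_bits j.+1 ltjn; rewrite /bit expnS !divnMA.
by rewrite -(odd_double_half x) -(odd_double_half y) eq_odd -!divn2 eq_half.
Qed.

Lemma bits_of_inj (n : nat) : injective (@bits_of n).
Proof.
move=> x y /ffunP eq_xy; apply/val_inj/(eq_from_bits (ltn_ord x) (ltn_ord y)).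
by move=> j ltjn; have := eq_xy (Ordinal ltjn); rewrite !ffunE.
Qed.

Lemma bits_of_bij (n : nat) : bijective (@bits_of n).
Proof.
apply: inj_card_bij; first exact: bits_of_inj.
by rewrite card_ffun card_bool !card_ord.
Qed.

Lemma card_set_bits_of (n : nat) (P : pred (bitstring n)) :
  #|[set b | P b]| = #|[set x : 'I_(2 ^ n) | P (bits_of x)]|.
Proof.
have [bits_to bitsK bits_toK] := bits_of_bij n.
rewrite -(card_imset _ (@bits_of_inj n)); apply: eq_card => b.
rewrite inE; apply/idP/imsetP => [Pb | [x + ->]]; last by rewrite inE.
by exists (bits_to b); rewrite ?inE bits_toK.
Qed.

Definition index_of_bits (m : nat) (y : {ffun 'I_m -> bool}) : 'I_(2 ^ m) :=
  Ordinal (ltn_pmod (\sum_(t < m) y t * 2 ^ t)%N (pow2_gt0 m)).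

Lemma index_of_bits_restrict (n : nat) (S : {set 'I_n}) (x : 'I_(2 ^ n)) :
  index_of_bits [ffun t : 'I_#|S| => bits_of x (enum_val t)] = sub_index S x.
Proof.
apply/val_inj; congr (_ %% _)%N; apply: eq_bigr => t _.
by rewrite !ffunE (enum_val_nth (enum_val t)) (nth_map (enum_val t)) -?cardE.
Qed.

Lemma sqrt_half_le_normalized_sqrt (R : rcfType) (N s eps : R) :
  0 < N -> eps <= s / N -> Num.sqrt (eps / 2) <= (Num.sqrt (2 * N))^-1 * Num.sqrt s.
Proof.
move=> /ltW N_ge0 eps_le.
rewrite -sqrtrV ?mulr_ge0 // -sqrtrM ?invr_ge0 ?mulr_ge0 //.
apply: ler_wsqrtr; rewrite invfM mulrAC -mulrA mulrC.
by rewrite ler_pM2l ?invr_gt0.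
Qed.

Section PhaseRounding.

Variable R : realType.
Local Notation C := R[i].

Lemma abs2_ge0 (z : C) : 0 <= abs2 z.
Proof. by rewrite addr_ge0 ?sqr_ge0. Qed.

Lemma sum_abs2_diag_le (m : nat) (A : 'M[C]_m) :
  \sum_(i < m) abs2 (A i i) <= \sum_(i < m) \sum_(j < m) abs2 (A i j).
Proof.
by apply: ler_sum => i _; rewrite (bigD1 i) //= lerDl sumr_ge0 // => j _; rewrite abs2_ge0.
Qed.

(* [re_rot_neg t w] means [Re (e^{-it} w) < 0]. *)
Definition re_rot_neg (t : R) (w : C) : bool :=
  complex.Re w * cos t + complex.Im w * sin t < 0.

(* [|e^{it} s - w|^2 = 1 + |w|^2 - 2 s Re (e^{-it} w)] for [s = +-1], and the
   cross term is nonnegative whenever the sign disagrees with the rounding. *)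
Lemma abs2_expi_sign_sub_ge1 (t : R) (b : bool) (w : C) :
  b != re_rot_neg t w -> 1 <= abs2 (expi t * (-1) ^+ b - w).
Proof.
have := cos2Dsin2 t; rewrite /re_rot_neg /abs2 /expi.
case: w => p q; case: b => /= cs2;
  by case: ltP => //= sgn _; rewrite ?expr1 ?expr0 ?mulrN1 ?mulr1 /=; nra.
Qed.

Lemma agree_off_refl (n : nat) (S : {set 'I_n}) (x : nat) : agree_off S x x.
Proof. by apply/forallP => j; rewrite eqxx implybT. Qed.

Definition rounding_junta (n : nat) (S : {set 'I_n}) (W : 'M[C]_(2 ^ #|S|))
    (t : R) (b : bitstring n) : bool :=
  let s := index_of_bits [ffun u : 'I_#|S| => b (enum_val u)] in
  re_rot_neg t (W s s).

Lemma rounding_junta_is_junta (n : nat) (S : {set 'I_n}) (W : 'M[C]_(2 ^ #|S|))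
    (t : R) :
  is_junta #|S| (rounding_junta W t).
Proof.
exists (fun u : 'I_#|S| => enum_val u).
by exists (fun y => re_rot_neg t (W (index_of_bits y) (index_of_bits y))).
Qed.

Lemma rounding_junta_bits_of (n : nat) (S : {set 'I_n}) (W : 'M[C]_(2 ^ #|S|))
    (t : R) (x : 'I_(2 ^ n)) :
  rounding_junta W t (bits_of x) = re_rot_neg t (W (sub_index S x) (sub_index S x)).
Proof. by rewrite /rounding_junta -index_of_bits_restrict. Qed.

Lemma card_disagree_le_frob2 (n : nat) (f : bitstring n -> bool)
    (S : {set 'I_n}) (W : 'M[C]_(2 ^ #|S|)) (t : R) :
  #|[set b | f b != rounding_junta W t b]|%:R
    <= \sum_(i < 2 ^ n) \sum_(j < 2 ^ n) abs2 ((expi t *: Uf R f - tensor_id W) i j).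
Proof.
apply: le_trans (sum_abs2_diag_le _).
rewrite card_set_bits_of -sum1dep_card natr_sum.
rewrite [leRHS](bigID [pred x | f (bits_of x) != rounding_junta W t (bits_of x)]) /=.
rewrite ler_wpDr ?sumr_ge0 // => [x _|]; first exact: abs2_ge0.
apply: ler_sum => x; rewrite rounding_junta_bits_of => disagree_x.
by rewrite !mxE eqxx agree_off_refl abs2_expi_sign_sub_ge1.
Qed.

End PhaseRounding.

Theorem mainTheorem3 (R : realType) (n k : nat) (f : bitstring n -> bool) (eps : R) :
  far_from_juntas k f eps ->
  forall V : 'M[R[i]]_(2 ^ n), quantum_junta k V ->
    Num.sqrt (eps / 2) <= dist (Uf R f) V.
Proof.
move=> far V [S [W [card_S [_ ->]]]]; subst k.
apply: lb_le_inf => [|_ [t _ <-]].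
  by eexists; exists 0; rewrite //= in_itv /= lexx mulr_gt0 ?pi_gt0.
apply: sqrt_half_le_normalized_sqrt; first by rewrite ltr0n expn_gt0.
apply: le_trans (far _ (rounding_junta_is_junta W t)) _.
by rewrite /disagree ler_pM2r ?invr_gt0 ?ltr0n ?expn_gt0 // card_disagree_le_frob2.
Qed.
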